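(* Let $\mathsf K$ be a variety of $\tau$-algebras. Then $\mathsf K$ is closed under expansion: for every $\tau$-algebra $\mathbf A$, if $\mathbf A_{\bar s}\in\mathsf K$ for every $s\in A^\omega$, then $\mathbf A\in\mathsf K$.
   Context: $\tau$ is a set of operation symbols each of arity $\omega$; a $\tau$-algebra is $\mathbf A=(A,f^{\mathbf A})_{f\in\tau}$ with $f^{\mathbf A}:A^\omega\to A$. A variety is a class of $\tau$-algebras closed under isomorphic copies, homomorphic images, subalgebras and arbitrary direct products. For $s\in A^\omega$, $\mathbf A_{\bar s}$ denotes the subalgebra of $\mathbf A$ generated by the set $\{s_i:i\in\omega\}$. *)

(* A tau-algebra with every operation of arity omega:
   carrier A and interpretation ops : tau -> (nat -> A) -> A. *)
Definition ops (tau A : Type) := tau -> (nat -> A) -> A.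

Definition algclass (tau : Type) := forall A : Type, ops tau A -> Prop.

Definition is_hom {tau A B : Type} (fA : ops tau A) (fB : ops tau B) (h : A -> B) :=
  forall (f : tau) (s : nat -> A), h (fA f s) = fB f (fun i => h (s i)).

Definition surjective {A B : Type} (h : A -> B) := forall b, exists a, h a = b.
Definition injective {A B : Type} (h : A -> B) := forall x y, h x = h y -> x = y.

Definition closed_sub {tau A : Type} (fA : ops tau A) (P : A -> Prop) :=
  forall (f : tau) (s : nat -> A), (forall i, P (s i)) -> P (fA f s).

Definition sub_ops {tau A : Type} (fA : ops tau A) (P : A -> Prop)
  (HP : closed_sub fA P) : ops tau {x : A | P x} :=
  fun f s => exist P (fA f (fun i => proj1_sig (s i)))
                     (HP f (fun i => proj1_sig (s i)) (fun i => proj2_sig (s i))).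

Definition prod_ops {tau I : Type} (C : I -> Type) (fC : forall i, ops tau (C i))
  : ops tau (forall i, C i) :=
  fun f s => fun i => fC i f (fun n => s n i).

Definition variety {tau : Type} (K : algclass tau) : Prop :=
  (forall (A B : Type) (fA : ops tau A) (fB : ops tau B) (h : A -> B),
      K A fA -> is_hom fA fB h -> injective h -> surjective h -> K B fB)
  /\ (forall (A B : Type) (fA : ops tau A) (fB : ops tau B) (h : A -> B),
      K A fA -> is_hom fA fB h -> surjective h -> K B fB)
  /\ (forall (A : Type) (fA : ops tau A) (P : A -> Prop) (HP : closed_sub fA P),
      K A fA -> K {x : A | P x} (sub_ops fA P HP))
  /\ (forall (I : Type) (C : I -> Type) (fC : forall i, ops tau (C i)),
      (forall i, K (C i) (fC i)) -> K (forall i, C i) (prod_ops C fC)).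

Definition generated {tau A : Type} (fA : ops tau A) (s : nat -> A) (x : A) : Prop :=
  forall P : A -> Prop, closed_sub fA P -> (forall i, P (s i)) -> P x.

Lemma generated_closed {tau A : Type} (fA : ops tau A) (s : nat -> A) :
  closed_sub fA (generated fA s).
Proof.
  intros f t Ht P HP Hs. apply HP. intro i. exact (Ht i P HP Hs).
Qed.

Definition gen_ops {tau A : Type} (fA : ops tau A) (s : nat -> A)
  : ops tau {x : A | generated fA s x} :=
  sub_ops fA (generated fA s) (generated_closed fA s).

From Stdlib Require Import Cantor ClassicalEpsilon FunctionalExtensionality ClassicalChoice.

(* Order the sequences s : nat -> A by "s is covered by u" (every s_i lies in
   the subalgebra generated by u); any countably many sequences have a common
   upper bound, obtained by interleaving them.  In the product of all the
   A_{\bar s}, the threads that are eventually constant along this directed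
   order form a subalgebra: an operation has countably many arguments, whose
   stabilization points again have a common bound.  Sending a thread to its
   eventual value is a surjective homomorphism onto A, so A lies in H S P of
   the A_{\bar s}. *)

Definition interleave {A : Type} (F : nat -> nat -> A) : nat -> A :=
  fun m => let (n, i) := Cantor.of_nat m in F n i.

Lemma interleave_pair {A : Type} (F : nat -> nat -> A) n i :
  interleave F (Cantor.to_nat (n, i)) = F n i.
Proof. unfold interleave. now rewrite Cantor.cancel_of_to. Qed.

Section Expansion.
Variables (tau A : Type) (fA : ops tau A).

Lemma generated_base (s : nat -> A) i : generated fA s (s i).
Proof. intros P _ Hs. apply Hs. Qed.

Definition covers (s u : nat -> A) := forall i, generated fA u (s i).

Lemma covers_refl s : covers s s.
Proof. intro i. apply generated_base. Qed.

Lemma covers_trans s u v : covers s u -> covers u v -> covers s v.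
Proof. intros Hsu Huv i. exact (Hsu i _ (generated_closed fA v) Huv). Qed.

Lemma covers_bound (F : nat -> nat -> A) : exists u, forall n, covers (F n) u.
Proof.
  exists (interleave F). intros n i.
  rewrite <- interleave_pair. apply generated_base.
Qed.

Definition thread := forall s : nat -> A, {x : A | generated fA s x}.

Definition thread_ops : ops tau thread :=
  prod_ops (fun s => {x : A | generated fA s x}) (gen_ops fA).

Definition stabilizes_from (d : thread) (s0 : nat -> A) :=
  forall u, covers s0 u -> proj1_sig (d u) = proj1_sig (d s0).

Definition eventually_constant (d : thread) := exists s0, stabilizes_from d s0.

Lemma eventually_constant_closed : closed_sub thread_ops eventually_constant.
Proof.
  intros f d Hd.
  destruct (choice (fun n s0 => stabilizes_from (d n) s0) Hd) as [W HW].
  destruct (covers_bound W) as [u0 Hu0].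
  exists u0. intros u Hu. simpl. f_equal.
  apply functional_extensionality. intro n.
  rewrite (HW n u (covers_trans _ _ _ (Hu0 n) Hu)).
  now rewrite (HW n u0 (Hu0 n)).
Qed.

Definition stable := {d : thread | eventually_constant d}.

Definition stable_ops : ops tau stable :=
  sub_ops thread_ops eventually_constant eventually_constant_closed.

Definition stabilization_point (d : stable) : nat -> A :=
  proj1_sig (constructive_indefinite_description _ (proj2_sig d)).

Definition limit (d : stable) : A := proj1_sig (proj1_sig d (stabilization_point d)).

Lemma limit_spec d u :
  covers (stabilization_point d) u -> proj1_sig (proj1_sig d u) = limit d.
Proof.
  unfold limit, stabilization_point.
  destruct (constructive_indefinite_description _ _) as [s0 Hs0]. apply Hs0.
Qed.

Lemma limit_hom : is_hom stable_ops fA limit.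
Proof.
  intros f d.
  set (F := fun n => match n with
                     | O => stabilization_point (stable_ops f d)
                     | S m => stabilization_point (d m)
                     end).
  destruct (covers_bound F) as [u Hu].
  rewrite <- (limit_spec _ u (Hu 0)). simpl. f_equal.
  apply functional_extensionality. intro n.
  exact (limit_spec (d n) u (Hu (S n))).
Qed.

(* The value of [thread_of a] at [s] is junk unless [a] is generated by [s];
   a thread only has to be right eventually. *)
Definition thread_of (a : A) : thread := fun s =>
  match excluded_middle_informative (generated fA s a) with
  | left Ha => exist _ a Ha
  | right _ => exist _ (s 0) (generated_base s 0)
  end.

Lemma thread_of_val a s : generated fA s a -> proj1_sig (thread_of a s) = a.
Proof.
  intro Ha. unfold thread_of.
  now destruct excluded_middle_informative.
Qed.

Lemma thread_of_stabilizes a : eventually_constant (thread_of a).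
Proof.
  exists (fun _ => a). intros u Hu.
  rewrite (thread_of_val a u (Hu 0)).
  now rewrite (thread_of_val a _ (generated_base (fun _ => a) 0)).
Qed.

Lemma limit_surj : surjective limit.
Proof.
  intro a. set (d := exist _ (thread_of a) (thread_of_stabilizes a)).
  exists d.
  destruct (covers_bound (fun n => match n with
                                   | O => stabilization_point d
                                   | S _ => fun _ => a
                                   end)) as [u Hu].
  rewrite <- (limit_spec d u (Hu 0)).
  exact (thread_of_val a u (Hu 1 0)).
Qed.

End Expansion.

Theorem theorem6p3 (tau : Type) (K : algclass tau) :
  variety K ->
  forall (A : Type) (fA : ops tau A),
    (forall s : nat -> A, K {x : A | generated fA s x} (gen_ops fA s)) ->
    K A fA.
Proof.
  intros [_ [K_hom [K_sub K_prod]]] A fA K_gen.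
  apply (K_hom _ A (stable_ops tau A fA) fA (limit tau A fA)).
  - apply K_sub, K_prod, K_gen.
  - apply limit_hom.
  - apply limit_surj.
Qed.
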